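(* Let $P$ be a join-semilattice with a least element $0$, and let $L:=\mathrm{Id}(P)$ be the lattice of ideals of $P$ ordered by inclusion. Suppose that $\dim_\vee(P)=n<\omega$. Then $L$ is order-scattered if and only if $P$ is order-scattered and $P$ has no join-subsemilattice isomorphic to $\Omega(\eta)$.
   Context: An ideal of a poset $P$ is a non-empty initial segment of $P$ that is up-directed. A poset is order-scattered if it contains no subset order-isomorphic to the chain $\mathbb{Q}$ of rationals. The join-dimension $\dim_\vee(P)$ of a join-semilattice $P$ is the least cardinal $\kappa$ such that $P$ admits a one-to-one join-preserving map into a direct product of $\kappa$ chains (with the componentwise order). $\Omega(\eta)$ denotes the join-subsemilattice of the direct product $\mathbb{N}\times D$ (componentwise order), where $\mathbb{N}$ is the chain of non-negative integers and $D$ is the chain of dyadic rationals in $[0,1)$, consisting of the pairs $(n,r)$ with $2^n r\in\mathbb{Z}$; its second projection is all of $D$ and each set $(\{n\}\times D)\cap\Omega(\eta)$ is finite. *)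

From mathcomp Require Import all_boot all_order all_algebra.
Set Implicit Arguments. Unset Strict Implicit. Unset Printing Implicit Defensive.
Import Order.TTheory GRing.Theory Num.Theory.

Section Defs.

Definition is_partial_order (T : Type) (le : T -> T -> Prop) : Prop :=
  (forall x, le x x) /\
  (forall x y, le x y -> le y x -> x = y) /\
  (forall x y z, le x y -> le y z -> le x z).

Definition is_total_order (T : Type) (le : T -> T -> Prop) : Prop :=
  is_partial_order le /\ (forall x y, le x y \/ le y x).

Definition is_lub (T : Type) (le : T -> T -> Prop) (x y z : T) : Prop :=
  le x z /\ le y z /\ (forall w, le x w -> le y w -> le z w).

Definition is_join_semilattice (T : Type) (le : T -> T -> Prop)
  (join : T -> T -> T) : Prop :=
  is_partial_order le /\ (forall x y, is_lub le x y (join x y)).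

Definition is_ideal (T : Type) (le : T -> T -> Prop) (I : T -> Prop) : Prop :=
  (exists x, I x) /\
  (forall x y, le x y -> I y -> I x) /\
  (forall x y, I x -> I y -> exists z, I z /\ le x z /\ le y z).

Definition set_incl (T : Type) (A B : T -> Prop) : Prop := forall x, A x -> B x.

Definition order_scattered_on (T : Type) (A : T -> Prop) (le : T -> T -> Prop)
  : Prop :=
  ~ exists f : rat -> T,
      (forall q, A (f q)) /\ (forall p q, (p <= q)%R <-> le (f p) (f q)).

Definition order_scattered (T : Type) (le : T -> T -> Prop) : Prop :=
  order_scattered_on (fun _ => True) le.

Definition join_embeds_in_chains (T : Type) (le : T -> T -> Prop)
  (join : T -> T -> T) (n : nat) : Prop :=
  exists (C : nat -> Type) (leC : forall i, C i -> C i -> Prop)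
         (f : T -> forall i, C i),
    (forall i, i < n -> is_total_order (leC i)) /\
    (forall x y, (forall i, i < n -> f x i = f y i) -> x = y) /\
    (forall x y i, i < n -> is_lub (leC i) (f x i) (f y i) (f (join x y) i)).

Definition join_dim (T : Type) (le : T -> T -> Prop) (join : T -> T -> T)
  (n : nat) : Prop :=
  join_embeds_in_chains le join n /\
  (forall m, m < n -> ~ join_embeds_in_chains le join m).

(* elements (n, r) of N x D with r dyadic in [0,1) and 2^n r an integer *)
Definition Omega_elt (x : nat * rat) : Prop :=
  (0 <= x.2)%R /\ (x.2 < 1)%R /\ exists z : int, (x.2 * 2%:R ^+ x.1 = z%:~R)%R.

Definition Omega_join (x y : nat * rat) : nat * rat :=
  (maxn x.1 y.1, Num.max x.2 y.2).

Definition has_Omega_subsemilattice (T : Type) (join : T -> T -> T) : Prop :=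
  exists g : nat * rat -> T,
    (forall x y, Omega_elt x -> Omega_elt y -> g x = g y -> x = y) /\
    (forall x y, Omega_elt x -> Omega_elt y ->
       g (Omega_join x y) = join (g x) (g y)).

End Defs.

(* A copy of Q in P gives one in Id(P) through principal ideals, and a copy
   of Omega(eta) gives one through the downsets below its elements of second
   coordinate at most t q, for an embedding t of Q into the dyadic rationals.

   Conversely, let F be a copy of Q in Id(P) and embed P into n chains. In each
   chain, the downset generated by F q grows with q; after shrinking to an
   interval (a, b), each coordinate is either strictly increasing or constant
   there, and some coordinate i is strict because an ideal is determined by
   its coordinate downsets. Choose disjoint intervals [u r, t r] in (a, b),
   ordered like Q, and a_r in F (t r) above F (u r) in every strict coordinate;
   then I = F q0, for q0 below all of them, lies below every a_r in the strict
   coordinates. If every constant coordinate of I has a maximum, some z in I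
   attains them all and r |-> a_r \/ z is a copy of Q in P. Otherwise a
   constant coordinate j of I without maximum yields an increasing sequence
   v_m in I, strictly increasing in j and dominating in the constant
   coordinates every a_r with 2^m r an integer, and (m, r) |-> a_r \/ v_m
   embeds Omega(eta) in P. *)

From mathcomp Require Import all_boot all_order all_algebra.
From mathcomp Require Import ring lra.
From Stdlib Require Import Classical IndefiniteDescription.
Set Implicit Arguments. Unset Strict Implicit. Unset Printing Implicit Defensive.
Import Order.TTheory GRing.Theory Num.Theory.

Local Open Scope ring_scope.

Definition dyadic (r : rat) := exists m : nat, exists z : int, r * 2%:R ^+ m = z%:~R.

Lemma dyadic0 : dyadic 0. Proof. by exists 0%N, 0; rewrite mul0r. Qed.

Lemma dyadic1 : dyadic 1. Proof. by exists 0%N, 1; rewrite mul1r expr0. Qed.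

Lemma dyadicD x y : dyadic x -> dyadic y -> dyadic (x + y).
Proof.
move=> [m [z Hz]] [m' [z' Hz']]; exists (m + m')%N, (z * 2 ^+ m' + z' * 2 ^+ m).
rewrite intrD !intrM -Hz -Hz' !rmorphXn /= exprD; ring.
Qed.

Lemma dyadic_half x : dyadic x -> dyadic (x / 2%:R).
Proof. by move=> [m [z Hz]]; exists m.+1, z; rewrite exprS -Hz; field. Qed.

Lemma Omega_elt_dyadic r : dyadic r -> 0 <= r -> r < 1 -> exists m, Omega_elt (m, r).
Proof. by move=> [m [z Hz]] r_ge0 r_lt1; exists m; split => //; split => //; exists z. Qed.

Lemma Omega_eltW m m' r : (m <= m')%N -> Omega_elt (m, r) -> Omega_elt (m', r).
Proof.
move=> le_mm' [r_ge0 [r_lt1 [z /= Hz]]]; split => //; split => //=.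
exists (z * 2 ^+ (m' - m)).
by rewrite intrM -Hz rmorphXn /= -mulrA -exprD subnKC.
Qed.

Lemma Omega_elt_join x y :
  Omega_elt x -> Omega_elt y -> Omega_elt (Omega_join x y).
Proof.
case: x y => [m r] [m' s] Hx Hy.
have := Omega_eltW (leq_maxl m m') Hx; have := Omega_eltW (leq_maxr m m') Hy.
by rewrite /Omega_join /=; case: (leP r s).
Qed.

Lemma Omega_eltP m r : Omega_elt (m, r) ->
  exists2 z : nat, (z < 2 ^ m)%N & r = z%:R / 2%:R ^+ m.
Proof.
move=> [/= r_ge0 [r_lt1 [z Hz]]].
have pow_gt0 : (0 : rat) < 2%:R ^+ m by apply: exprn_gt0.
have -> : r = z%:~R / 2%:R ^+ m by rewrite -Hz mulfK // gt_eqF.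
have z_ge0 : 0 <= z.
  by rewrite -(ler0z rat) -Hz; apply: mulr_ge0 => //; apply: ltW.
have z_lt : z%:~R < (2 ^ m)%:R :> rat.
  by rewrite -Hz natrX -[X in _ < X]mul1r ltr_pM2r.
case: z z_ge0 {Hz} z_lt => // k _ k_lt; exists k => //.
by rewrite -(ltr_nat rat).
Qed.

(* An entry (x, (u, t)) records the interval [u, t] assigned to x. *)
Definition placed := (rat * (rat * rat))%type.

Definition gap_lo (s : seq placed) (x : rat) : rat :=
  foldr (fun e acc => if e.1 < x then Num.max e.2.2 acc else acc) 0 s.

Definition gap_hi (s : seq placed) (x : rat) : rat :=
  foldr (fun e acc => if x < e.1 then Num.min e.2.1 acc else acc) 1 s.

(* A new rational x gets a subinterval of the gap (lo, hi) left by the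
   intervals already placed, away from both ends and with dyadic endpoints. *)
Definition place (s : seq placed) (x : rat) : placed :=
  let lo := gap_lo s x in let hi := gap_hi s x in
  (x, ((lo + lo + lo + hi) / 4%:R, (lo + hi) / 2%:R)).

Fixpoint placements (N : nat) : seq placed :=
  if N is N'.+1 then
    let s := placements N' in
    if (unpickle N' : option rat) is Some x then
      if x \in map fst s then s else rcons s (place s x)
    else s
  else [::].

Lemma gap_lo_ge s x e : e \in s -> e.1 < x -> e.2.2 <= gap_lo s x.
Proof.
elim: s => //= e' s IH; rewrite inE => /orP [/eqP -> -> | es ex].
  by rewrite le_max lexx.
by case: ifP => _; [rewrite le_max (IH es ex) orbT | exact: IH].
Qed.

Lemma gap_hi_le s x e : e \in s -> x < e.1 -> gap_hi s x <= e.2.1.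
Proof.
elim: s => //= e' s IH; rewrite inE => /orP [/eqP -> -> | es xe].
  by rewrite ge_min lexx.
by case: ifP => _; [rewrite ge_min (IH es xe) orbT | exact: IH].
Qed.

Lemma gap_lo_ge0 s x : 0 <= gap_lo s x.
Proof. by elim: s => //= e s IH; case: ifP => // _; rewrite le_max IH orbT. Qed.

Lemma gap_hi_le1 s x : gap_hi s x <= 1.
Proof. by elim: s => //= e s IH; case: ifP => // _; rewrite ge_min IH orbT. Qed.

Lemma gap_loP s x :
  gap_lo s x = 0 \/ exists2 e, e \in s & e.1 < x /\ gap_lo s x = e.2.2.
Proof.
elim: s => [|e s IH] /=; first by left.
have IH' : gap_lo s x = 0 \/ exists2 e', e' \in e :: s & e'.1 < x /\ gap_lo s x = e'.2.2.
  by case: IH => [|[e' e's H]]; [left | right; exists e'; rewrite ?inE ?e's ?orbT].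
case: ifP => // ex; rewrite /Num.max; case: ifP => // _.
by right; exists e; rewrite ?inE ?eqxx.
Qed.

Lemma gap_hiP s x :
  gap_hi s x = 1 \/ exists2 e, e \in s & x < e.1 /\ gap_hi s x = e.2.1.
Proof.
elim: s => [|e s IH] /=; first by left.
have IH' : gap_hi s x = 1 \/ exists2 e', e' \in e :: s & x < e'.1 /\ gap_hi s x = e'.2.1.
  by case: IH => [|[e' e's H]]; [left | right; exists e'; rewrite ?inE ?e's ?orbT].
case: ifP => // xe; rewrite /Num.min; case: ifP => // _.
by right; exists e; rewrite ?inE ?eqxx.
Qed.

Definition well_placed (s : seq placed) :=
  (forall e, e \in s ->
     [/\ 0 < e.2.1, e.2.1 < e.2.2, e.2.2 < 1, dyadic e.2.1 & dyadic e.2.2]) /\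
  (forall e e', e \in s -> e' \in s -> e.1 < e'.1 -> e.2.2 < e'.2.1).

Lemma well_placed_rcons s x : well_placed s -> well_placed (rcons s (place s x)).
Proof.
move=> [s_in s_sep].
have lo_lt_hi : gap_lo s x < gap_hi s x.
  case: (gap_loP s x) => [->|[e es [ex ->]]];
  case: (gap_hiP s x) => [->|[e' e's [xe' ->]]] //.
  - by case: (s_in e' e's).
  - by case: (s_in e es).
  - by apply: s_sep => //; apply: lt_trans xe'.
have dy_lo : dyadic (gap_lo s x).
  by case: (gap_loP s x) => [->|[e es [_ ->]]]; [exact: dyadic0 | case: (s_in e es)].
have dy_hi : dyadic (gap_hi s x).
  by case: (gap_hiP s x) => [->|[e es [_ ->]]]; [exact: dyadic1 | case: (s_in e es)].
have lo_ge0 := gap_lo_ge0 s x; have hi_le1 := gap_hi_le1 s x.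
split.
  move=> e; rewrite mem_rcons inE => /orP [/eqP -> /= | ]; last exact: s_in.
  split; try lra.
    have -> : 4%:R = 2%:R * 2%:R :> rat by rewrite -natrM.
    by rewrite invfM mulrA; do 2 apply: dyadic_half; do 3! apply: dyadicD => //.
  exact: dyadic_half (dyadicD _ _).
move=> e e'; rewrite !mem_rcons !inE.
case/orP => [/eqP -> | es]; case/orP => [/eqP -> | e's] /=.
- by rewrite ltxx.
- by move=> xe'; apply: lt_le_trans (gap_hi_le e's xe'); lra.
- by move=> ex; apply: le_lt_trans (gap_lo_ge es ex) _; lra.
- exact: s_sep.
Qed.

Lemma well_placed_placements N : well_placed (placements N).
Proof.
elim: N => [|N IH] /=; first by split.
by case: (unpickle N) => // x; case: ifP => // _; apply: well_placed_rcons.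
Qed.

Lemma placements_mono N M e : (N <= M)%N -> e \in placements N -> e \in placements M.
Proof.
elim: M => [|M IH]; first by rewrite leqn0 => /eqP ->.
rewrite leq_eqVlt ltnS => /orP [/eqP -> // | le_NM eN] /=.
have {}eN := IH le_NM eN.
by case: (unpickle M) => // x; case: ifP => // _; rewrite mem_rcons inE eN orbT.
Qed.

Lemma placements_pickle x : exists p, (x, p) \in placements (pickle x).+1.
Proof.
rewrite /= pickleK /=; case: ifP => [/mapP [[y p] yp /= xy] | _].
  by exists p; rewrite {1}xy.
by exists (place (placements (pickle x)) x).2; rewrite mem_rcons inE eqxx.
Qed.

Lemma dyadic_gap_embedding : exists u t : rat -> rat,
  (forall x, [/\ 0 < u x, u x < t x, t x < 1 & dyadic (t x)]) /\
  (forall x y, x < y -> t x < u y).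
Proof.
have pos x : {p | (x, p) \in placements (pickle x).+1}.
  by apply: sigW; apply: placements_pickle.
exists (fun x => (sval (pos x)).1), (fun x => (sval (pos x)).2); split.
  move=> x; case: (pos x) => p xp /=.
  have [in_range _] := well_placed_placements (pickle x).+1.
  by case: (in_range _ xp).
move=> x y xy; case: (pos x) => p xp; case: (pos y) => p' yp' /=.
set M := maxn (pickle x).+1 (pickle y).+1.
have xpM := placements_mono (leq_maxl _ _ : ((pickle x).+1 <= M)%N) xp.
have ypM := placements_mono (leq_maxr _ _ : ((pickle y).+1 <= M)%N) yp'.
have [_ sep] := well_placed_placements M.
exact: sep xpM ypM xy.
Qed.

Lemma gap_embedding a b : a < b -> exists q0 (u t : rat -> rat),
  [/\ a < q0, forall x, q0 < u x /\ u x < t x, forall x, t x < b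
    & forall x y, x < y -> t x < u y].
Proof.
move=> ab; have [u [t [ut_in ut_gap]]] := dyadic_gap_embedding.
pose d := (b - a) / 2%:R; have d_gt0 : 0 < d by rewrite divr_gt0 // subr_gt0.
have d2 : a + d * 2%:R = b by rewrite /d mulfVK ?pnatr_eq0 //; ring.
pose phi x := a + d * (x + 1).
have phi_lt x y : x < y -> phi x < phi y by move=> xy; rewrite ltrD2l ltr_pM2l ?ltrD2r.
exists (phi 0), (phi \o u), (phi \o t); split => /=.
- by rewrite /phi add0r mulr1 ltrDl.
- by move=> x; case: (ut_in x) => *; split; apply: phi_lt.
- move=> x; rewrite -d2 /phi ltrD2l ltr_pM2l //.
  by case: (ut_in x) => *; lra.
- by move=> x y /ut_gap /phi_lt.
Qed.

Section Refinement.

Unset Implicit Arguments.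
Variables (C : nat -> Type) (G : forall k, rat -> C k -> Prop).
Set Implicit Arguments.
Hypothesis G_mono : forall k (p q : rat), p <= q -> set_incl (G k p) (G k q).

Definition strict_on k (a b : rat) :=
  forall p q, a < p -> p < q -> q < b -> ~ set_incl (G k q) (G k p).

Definition constant_on k (a b : rat) :=
  forall p q, a < p -> p < b -> a < q -> q < b -> set_incl (G k q) (G k p).

Lemma strict_onS k a b a' b' : a <= a' -> b' <= b -> strict_on k a b -> strict_on k a' b'.
Proof. by move=> aa' b'b strictk p q a'p pq qb'; apply: strictk => //; lra. Qed.

Lemma constant_onS k a b a' b' :
  a <= a' -> b' <= b -> constant_on k a b -> constant_on k a' b'.
Proof. by move=> aa' b'b constk p q a'p pb' a'q qb'; apply: constk; lra. Qed.

(* A coordinate that is not strict on (a, b) has G k q included in G k p for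
   some a < p < q < b, hence is constant on (p, q): the finitely many
   coordinates are handled one at a time by shrinking the interval. *)
Lemma refine_interval N : exists a b, a < b /\
  forall k, (k < N)%N -> strict_on k a b \/ constant_on k a b.
Proof.
elim: N => [|N [a [b [ab refined]]]]; first by exists 0, 1.
have [strictN | not_strictN] := classic (strict_on N a b).
  exists a, b; split => // k; rewrite ltnS leq_eqVlt.
  by case/orP => [/eqP -> | /refined]; [left |].
have [p [q [ap pq qb Gqp]]] :
    exists p q, [/\ a < p, p < q, q < b & set_incl (G N q) (G N p)].
  apply: NNPP => none; apply: not_strictN => p q ap pq qb Gqp.
  by apply: none; exists p, q.
exists p, q; split => // k; rewrite ltnS leq_eqVlt => /orP [/eqP -> | /refined].
  right=> x y px xq py yq c /(G_mono (ltW yq)) /Gqp; exact: G_mono (ltW px) c.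
by case=> [/(strict_onS (ltW ap) (ltW qb)) | /(constant_onS (ltW ap) (ltW qb))];
  [left | right].
Qed.

End Refinement.

Section JoinSemilattice.

Variables (P : Type) (le : P -> P -> Prop) (join : P -> P -> P).
Hypothesis HP : is_join_semilattice le join.

Lemma po_refl x : le x x. Proof. by case: HP => [[refl _] _]. Qed.

Lemma po_trans x y z : le x y -> le y z -> le x z.
Proof. by case: HP => [[_ [_ trans]] _]; apply: trans. Qed.

Lemma po_anti x y : le x y -> le y x -> x = y.
Proof. by case: HP => [[_ [anti _]] _]; apply: anti. Qed.

Lemma join_ubl x y : le x (join x y). Proof. by case: HP => _ /(_ x y) [ub _]. Qed.

Lemma join_ubr x y : le y (join x y). Proof. by case: HP => _ /(_ x y) [_ [ub _]]. Qed.

Lemma join_lub x y w : le x w -> le y w -> le (join x y) w.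
Proof. by case: HP => _ /(_ x y) [_ [_ least]]; apply: least. Qed.

Lemma join_r x y : le x y -> join x y = y.
Proof. by move=> xy; apply: po_anti (join_ubr x y); apply: join_lub (po_refl y). Qed.

Lemma ideal_join I x y : is_ideal le I -> I x -> I y -> I (join x y).
Proof.
move=> [_ [down directed]] Ix Iy; have [z [Iz [xz yz]]] := directed x y Ix Iy.
exact: down (join_lub xz yz) Iz.
Qed.

Lemma ideal_meets_upclosed I (Q : nat -> P -> Prop) N : is_ideal le I ->
  (forall k x y, (k < N)%N -> le x y -> Q k x -> Q k y) ->
  (forall k, (k < N)%N -> exists2 y, I y & Q k y) ->
  exists2 y, I y & forall k, (k < N)%N -> Q k y.
Proof.
move=> HI Q_up; elim: N Q_up => [|N IH] Q_up QN.
  by case: HI => [[y Iy] _]; exists y.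
have [k kN|y Iy Qy] := IH (fun k x y kN => Q_up k x y (ltnW kN)).
  exact: QN (ltnW kN).
have [y' Iy' Qy'] := QN N (ltnSn N).
exists (join y y') => [|k]; first exact: ideal_join.
rewrite ltnS leq_eqVlt => /orP [/eqP -> | kN].
  exact: Q_up N _ _ (ltnSn N) (join_ubr y y') Qy'.
exact: Q_up k _ _ (ltnW kN) (join_ubl y y') (Qy k kN).
Qed.

Lemma principal_ideal x : is_ideal le (le^~ x).
Proof.
split; first by exists x; apply: po_refl.
split=> [y z yz zx | y z yx zx]; first exact: po_trans yz zx.
by exists x; split; [apply: po_refl | split].
Qed.

Lemma scattered_of_ideals_scattered :
  order_scattered_on (is_ideal le) (@set_incl P) -> order_scattered le.
Proof.
move=> scL [h [_ h_iso]]; apply: scL.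
exists (fun q => le^~ (h q)); split=> [q | p q]; first exact: principal_ideal.
split=> [/h_iso pq y yp | incl]; first exact: po_trans yp pq.
exact/h_iso/incl/po_refl.
Qed.

Section OmegaDownsets.

Variable g : nat * rat -> P.
Hypothesis g_inj : forall x y, Omega_elt x -> Omega_elt y -> g x = g y -> x = y.
Hypothesis g_join : forall x y, Omega_elt x -> Omega_elt y ->
  g (Omega_join x y) = join (g x) (g y).

Definition Omega_downset (s : rat) (x : P) :=
  exists m r, [/\ Omega_elt (m, r), r <= s & le x (g (m, r))].

Lemma Omega_downset_ideal s m : Omega_elt (m, s) -> is_ideal le (Omega_downset s).
Proof.
move=> ms; split; first by exists (g (m, s)), m, s; split=> //; apply: po_refl.
split=> [x y xy [m' [r [m'r rs yg]]] | x y [m1 [r1 [Hx1 r1s xg]]] [m2 [r2 [Hx2 r2s yg]]]].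
  by exists m', r; split=> //; apply: po_trans xy yg.
exists (g (Omega_join (m1, r1) (m2, r2))); split.
  exists (maxn m1 m2), (Num.max r1 r2); split; last exact: po_refl.
    exact: (Omega_elt_join Hx1 Hx2).
  by rewrite ge_max r1s r2s.
rewrite g_join //; split; first exact: po_trans xg (join_ubl _ _).
exact: po_trans yg (join_ubr _ _).
Qed.

Lemma Omega_downset_mono s s' : s <= s' -> set_incl (Omega_downset s) (Omega_downset s').
Proof.
by move=> ss' x [m [r [mr rs xg]]]; exists m, r; split=> //; apply: le_trans ss'.
Qed.

Lemma Omega_downset_incl s s' m : Omega_elt (m, s) ->
  set_incl (Omega_downset s) (Omega_downset s') -> s <= s'.
Proof.
move=> ms /(_ (g (m, s))) [|m' [r [m'r rs' gle]]].
  by exists m, s; split=> //; apply: po_refl.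
have := join_r gle; rewrite -g_join // => /(g_inj (Omega_elt_join ms m'r) m'r).
by move=> /(congr1 snd) /= /max_idPr sr; apply: le_trans rs'.
Qed.

End OmegaDownsets.

Lemma no_Omega_of_ideals_scattered :
  order_scattered_on (is_ideal le) (@set_incl P) -> ~ has_Omega_subsemilattice join.
Proof.
move=> scL [g [g_inj g_join]]; apply: scL.
have [u [t [ut_in ut_gap]]] := dyadic_gap_embedding.
have t_lt p q : p < q -> t p < t q.
  by move=> /ut_gap; case: (ut_in q) => *; lra.
have t_Omega q : exists m, Omega_elt (m, t q).
  by case: (ut_in q) => *; apply: Omega_elt_dyadic => //; lra.
exists (fun q => Omega_downset g (t q)); split=> [q | p q].
  by have [m mq] := t_Omega q; apply: Omega_downset_ideal mq.
split=> [pq | incl]; first by apply: Omega_downset_mono; rewrite (le_mono t_lt).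
have [m mp] := t_Omega p.
by have := Omega_downset_incl g_inj g_join mp incl; rewrite (le_mono t_lt).
Qed.

Section ChainCoordinates.

Unset Implicit Arguments.
Variables (C : nat -> Type) (leC : forall i, C i -> C i -> Prop).
Variables (f : P -> forall i, C i) (n : nat).
Set Implicit Arguments.
Hypothesis chains : forall i, (i < n)%N -> is_total_order (leC i).
Hypothesis f_inj : forall x y, (forall i, (i < n)%N -> f x i = f y i) -> x = y.
Hypothesis f_join : forall x y i, (i < n)%N ->
  is_lub (leC i) (f x i) (f y i) (f (join x y) i).

Lemma chain_refl i c : (i < n)%N -> leC i c c.
Proof. by move=> /chains [[refl _] _]. Qed.

Lemma chain_trans i a b c : (i < n)%N -> leC i a b -> leC i b c -> leC i a c.
Proof. by move=> /chains [[_ [_ trans]] _]; apply: trans. Qed.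

Lemma chain_anti i a b : (i < n)%N -> leC i a b -> leC i b a -> a = b.
Proof. by move=> /chains [[_ [anti _]] _]; apply: anti. Qed.

Lemma chain_leNge i a b : (i < n)%N -> ~ leC i a b -> leC i b a.
Proof. by move=> /chains [_ /(_ a b) [] // ba]. Qed.

Lemma coord_mono x y i : (i < n)%N -> le x y -> leC i (f x i) (f y i).
Proof.
move=> lt_in xy; rewrite -(join_r xy).
by have [ub _] := f_join x y lt_in.
Qed.

Lemma coord_le x y : (forall i, (i < n)%N -> leC i (f x i) (f y i)) -> le x y.
Proof.
move=> xy; suff <- : join x y = y by apply: join_ubl.
apply: f_inj => i lt_in; have [_ [ub least]] := f_join x y lt_in.
by apply: chain_anti lt_in (least _ (xy i lt_in) (chain_refl _ lt_in)) ub.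
Qed.

Lemma coord_join_l x y i : (i < n)%N -> leC i (f y i) (f x i) ->
  f (join x y) i = f x i.
Proof.
move=> lt_in yx; have [ub [_ least]] := f_join x y lt_in.
exact: chain_anti lt_in (least _ (chain_refl _ lt_in) yx) ub.
Qed.

Lemma coord_join_r x y i : (i < n)%N -> leC i (f x i) (f y i) ->
  f (join x y) i = f y i.
Proof.
move=> lt_in xy; have [_ [ub least]] := f_join x y lt_in.
exact: chain_anti lt_in (least _ xy (chain_refl _ lt_in)) ub.
Qed.

Unset Implicit Arguments.
Definition cut k (I : P -> Prop) (c : C k) := exists2 x, I x & leC k c (f x k).
Set Implicit Arguments.

Lemma cut_down k I c c' : (k < n)%N -> leC k c' c -> cut k I c -> cut k I c'.
Proof. by move=> lt_kn c'c [x Ix cx]; exists x => //; apply: chain_trans c'c cx. Qed.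

Lemma cut_self k I x : (k < n)%N -> I x -> cut k I (f x k).
Proof. by move=> lt_kn Ix; exists x => //; apply: chain_refl. Qed.

Lemma ideal_mem_of_cuts I x : is_ideal le I ->
  (forall k, (k < n)%N -> cut k I (f x k)) -> I x.
Proof.
move=> HI cuts.
have [y Iy xy] := ideal_meets_upclosed
  (Q := fun k y => leC k (f x k) (f y k)) HI
  (fun k y y' lt_kn yy' xy => chain_trans lt_kn xy (coord_mono lt_kn yy')) cuts.
by case: HI => _ [down _]; apply: down (coord_le xy) Iy.
Qed.

Section SeparatedFamily.

Variables (I : P -> Prop) (S : nat -> Prop) (a : rat -> P) (i : nat).
Hypothesis HI : is_ideal le I.
Hypothesis a_strict : forall r s k, r < s -> (k < n)%N -> S k ->
  ~ leC k (f (a s) k) (f (a r) k).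
Hypothesis a_above : forall y r k, I y -> (k < n)%N -> S k ->
  ~ leC k (f (a r) k) (f y k).
Hypothesis a_cut : forall r k, (k < n)%N -> ~ S k -> cut k I (f (a r) k).
Hypotheses (lt_in : (i < n)%N) (Si : S i).

Lemma a_coord_mono r s k : r <= s -> (k < n)%N -> S k ->
  leC k (f (a r) k) (f (a s) k).
Proof.
rewrite le_eqVlt => /orP [/eqP -> | rs] lt_kn Sk; first exact: chain_refl.
by apply: chain_leNge => //; apply: a_strict.
Qed.

Lemma a_coord_inj r s : f (a r) i = f (a s) i -> r = s.
Proof.
move=> ars; case: (ltgtP r s) => // [rs | sr]; exfalso.
  by apply: (a_strict rs lt_in Si); rewrite ars; apply: chain_refl.
by apply: (a_strict sr lt_in Si); rewrite -ars; apply: chain_refl.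
Qed.

Lemma coord_join_ideal y r : I y -> f (join (a r) y) i = f (a r) i.
Proof.
by move=> Iy; apply: coord_join_l => //; apply: chain_leNge; last exact: a_above.
Qed.

Lemma a_le_join w r s : r <= s ->
  (forall k, (k < n)%N -> ~ S k -> leC k (f (a r) k) (f w k)) ->
  le (a r) (join (a s) w).
Proof.
move=> rs aw; apply: coord_le => k lt_kn; have [Sk | nSk] := classic (S k).
  exact: chain_trans lt_kn (a_coord_mono rs lt_kn Sk) (coord_mono lt_kn (join_ubl _ _)).
exact: chain_trans lt_kn (aw k lt_kn nSk) (coord_mono lt_kn (join_ubr _ _)).
Qed.

Definition coord_max k (z : P) := I z /\ forall y, I y -> leC k (f y k) (f z k).

Lemma not_scattered_of_coord_maxima :
  (forall k, (k < n)%N -> ~ S k -> exists z, coord_max k z) -> ~ order_scattered le.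
Proof.
move=> maxima.
have [z Iz z_max] : exists2 z, I z &
    forall k, (k < n)%N -> ~ S k -> forall y, I y -> leC k (f y k) (f z k).
  apply: (ideal_meets_upclosed
    (Q := fun k z => ~ S k -> forall y, I y -> leC k (f y k) (f z k)) HI)
    => [k z z' lt_kn zz' zmax nSk y Iy | k lt_kn].
    exact: chain_trans lt_kn (zmax nSk y Iy) (coord_mono lt_kn zz').
  have [Sk | nSk] := classic (S k); first by case: HI => [[y Iy] _]; exists y.
  by have [z' [Iz' z'max]] := maxima k lt_kn nSk; exists z'.
pose b r := join (a r) z.
have b_mono p q : p <= q -> le (b p) (b q).
  move=> pq; apply: join_lub (join_ubr _ _); apply: a_le_join => // k lt_kn nSk.
  have [y Iy ay] := a_cut p lt_kn nSk.
  exact: chain_trans lt_kn ay (z_max k lt_kn nSk y Iy).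
apply; exists b; split=> // p q; split=> [|bpq]; first exact: b_mono.
case: (leP p q) => // qp; suff pq : p = q by rewrite pq ltxx in qp.
apply: a_coord_inj; have := congr1 (f^~ i) (po_anti bpq (b_mono q p (ltW qp))).
by rewrite /= !coord_join_ideal.
Qed.

Lemma exists_dominating r : exists2 y, I y &
  forall k, (k < n)%N -> ~ S k -> leC k (f (a r) k) (f y k).
Proof.
apply: (ideal_meets_upclosed
  (Q := fun k y => ~ S k -> leC k (f (a r) k) (f y k)) HI)
  => [k y y' lt_kn yy' ay nSk | k lt_kn].
  exact: chain_trans lt_kn (ay nSk) (coord_mono lt_kn yy').
have [Sk | nSk] := classic (S k); first by case: HI => [[y Iy] _]; exists y.
by have [y Iy ay] := a_cut r lt_kn nSk; exists y.
Qed.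

Section OmegaCase.

Variable j : nat.
Hypotheses (lt_jn : (j < n)%N) (nSj : ~ S j) (no_max : ~ exists z, coord_max j z).

Definition dominates m (y : P) :=
  forall r, Omega_elt (m, r) -> forall k, (k < n)%N -> ~ S k -> leC k (f (a r) k) (f y k).

Lemma dominatesW m y y' : le y y' -> dominates m y -> dominates m y'.
Proof.
move=> yy' dom r mr k lt_kn nSk.
exact: chain_trans lt_kn (dom r mr k lt_kn nSk) (coord_mono lt_kn yy').
Qed.

Lemma Omega_step x m : I x -> exists y,
  [/\ I y, le x y, ~ leC j (f y j) (f x j) & dominates m y].
Proof.
move=> Ix.
have [y1 Iy1 y1x] : exists2 y1, I y1 & ~ leC j (f y1 j) (f x j).
  apply: NNPP => none; apply: no_max; exists x; split=> // y Iy.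
  by apply: NNPP => yx; apply: none; exists y.
have [y2 Iy2 y2dom] : exists2 y2, I y2 & forall z, (z < 2 ^ m)%N ->
    forall k, (k < n)%N -> ~ S k -> leC k (f (a (z%:R / 2%:R ^+ m)) k) (f y2 k).
  apply: (ideal_meets_upclosed (Q := fun z y => forall k, (k < n)%N -> ~ S k ->
    leC k (f (a (z%:R / 2%:R ^+ m)) k) (f y k)) HI)
    => [z y y' _ yy' ay k lt_kn nSk | z _].
    exact: chain_trans lt_kn (ay k lt_kn nSk) (coord_mono lt_kn yy').
  exact: exists_dominating.
exists (join x (join y1 y2)); split; first by do 2?apply: ideal_join.
- exact: join_ubl.
- move=> yx; apply: y1x; apply: chain_trans lt_jn (coord_mono lt_jn _) yx.
  exact: po_trans (join_ubl y1 y2) (join_ubr _ _).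
- apply: dominatesW (po_trans (join_ubr y1 y2) (join_ubr _ _)) _.
  by move=> r /Omega_eltP [z lt_z ->]; apply: y2dom.
Qed.

Lemma Omega_sequence : exists v : nat -> P,
  [/\ forall m, I (v m), forall m, le (v m) (v m.+1),
      forall m, ~ leC j (f (v m.+1) j) (f (v m) j) & forall m, dominates m (v m)].
Proof.
have [x0 Ix0] := proj1 HI.
have step (xm : P * nat) : exists y, I xm.1 ->
    [/\ I y, le xm.1 y, ~ leC j (f y j) (f xm.1 j) & dominates xm.2 y].
  case: xm => x m; have [Ix | nIx] := classic (I x); last by exists x.
  by have [y y_spec] := Omega_step m Ix; exists y.
have [next next_spec] := functional_choice _ step.
pose v := fix v m := if m is m'.+1 then next (v m', m) else next (x0, 0%N).
have Iv m : I (v m).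
  elim: m => [|m IH]; first by case: (next_spec (x0, 0%N) Ix0).
  by case: (next_spec (v m, m.+1) IH).
exists v; split=> // [m | m | [|m]].
- by case: (next_spec (v m, m.+1) (Iv m)).
- by case: (next_spec (v m, m.+1) (Iv m)).
- by case: (next_spec (x0, 0%N) Ix0).
- by case: (next_spec (v m, m.+1) (Iv m)).
Qed.

Section OmegaEmbedding.

Variable v : nat -> P.
Hypotheses (v_ideal : forall m, I (v m)) (v_succ : forall m, le (v m) (v m.+1)).
Hypothesis v_strict : forall m, ~ leC j (f (v m.+1) j) (f (v m) j).
Hypothesis v_dom : forall m, dominates m (v m).

Lemma v_mono m m' : (m <= m')%N -> le (v m) (v m').
Proof. exact: homo_leq po_refl (fun y x z => @po_trans x y z) v_succ m m'. Qed.

Lemma v_coord_inj m m' : f (v m) j = f (v m') j -> m = m'.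
Proof.
have strict p q : (p < q)%N -> f (v p) j <> f (v q) j.
  move=> pq vpq; apply: (@v_strict p); rewrite vpq.
  exact: coord_mono lt_jn (v_mono pq).
move=> vmm'; case: (ltngtP m m') => // [mm' | m'm]; exfalso.
  exact: strict mm' vmm'.
exact: strict m'm (esym vmm').
Qed.

Definition Omega_map (x : nat * rat) := join (a x.2) (v x.1).

Lemma Omega_map_mono m m' r r' : Omega_elt (m, r) -> (m <= m')%N -> r <= r' ->
  le (Omega_map (m, r)) (Omega_map (m', r')).
Proof.
move=> mr mm' rr'; apply: join_lub; last exact: po_trans (v_mono mm') (join_ubr _ _).
apply: a_le_join => // k lt_kn nSk.
exact: chain_trans lt_kn (v_dom mr lt_kn nSk) (coord_mono lt_kn (v_mono mm')).
Qed.

Lemma Omega_map_inj x y : Omega_elt x -> Omega_elt y -> Omega_map x = Omega_map y -> x = y.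
Proof.
case: x y => [m r] [m' s] mr m's gxy.
have coord_j p q : Omega_elt (p, q) -> f (Omega_map (p, q)) j = f (v p) j.
  by move=> pq; apply: coord_join_r => //=; exact: (v_dom pq lt_jn nSj).
congr pair.
  by apply: v_coord_inj; rewrite -(coord_j m r) // -(coord_j m' s) // gxy.
apply: a_coord_inj; rewrite -(coord_join_ideal r (v_ideal m)).
by rewrite -(coord_join_ideal s (v_ideal m')) [join _ _]gxy.
Qed.

Lemma Omega_map_join x y : Omega_elt x -> Omega_elt y ->
  Omega_map (Omega_join x y) = join (Omega_map x) (Omega_map y).
Proof.
case: x y => [m r] [m' s] mr m's; rewrite /Omega_join /=.
apply: po_anti; last first.
  apply: join_lub; apply: Omega_map_mono => //;
  by rewrite ?leq_maxl ?leq_maxr ?le_max ?lexx ?orbT.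
have ubl := join_ubl (Omega_map (m, r)) (Omega_map (m', s)).
have ubr := join_ubr (Omega_map (m, r)) (Omega_map (m', s)).
apply: join_lub.
  by case: (leP r s) => _; [apply: po_trans ubr | apply: po_trans ubl]; apply: join_ubl.
by case: (leqP m m') => _; [apply: po_trans ubr | apply: po_trans ubl]; apply: join_ubr.
Qed.

Lemma has_Omega_of_sequence : has_Omega_subsemilattice join.
Proof. by exists Omega_map; split; [apply: Omega_map_inj | apply: Omega_map_join]. Qed.

End OmegaEmbedding.

End OmegaCase.

Lemma not_scattered_or_Omega : ~ order_scattered le \/ has_Omega_subsemilattice join.
Proof.
have [[j [lt_jn nSj no_max]] | maxima] :=
  classic (exists j, [/\ (j < n)%N, ~ S j & ~ exists z, coord_max j z]).
  right; have [v [v_ideal v_succ v_strict v_dom]] := Omega_sequence lt_jn no_max.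
  exact: has_Omega_of_sequence v_ideal v_succ v_strict v_dom.
left; apply: not_scattered_of_coord_maxima => k lt_kn nSk.
by apply: NNPP => no_max; apply: maxima; exists k.
Qed.

End SeparatedFamily.

Section IdealChain.

Variable F : rat -> P -> Prop.
Hypothesis F_ideal : forall q, is_ideal le (F q).
Hypothesis F_iso : forall p q, p <= q <-> set_incl (F p) (F q).

Unset Implicit Arguments.
Definition coord_cut k q := cut k (F q).
Set Implicit Arguments.

Lemma coord_cut_mono k p q : p <= q -> set_incl (coord_cut k p) (coord_cut k q).
Proof. by move=> /F_iso pq c [x Fx cx]; exists x => //; apply: pq. Qed.

Lemma exists_strict_coord a b : a < b ->
  (forall k, (k < n)%N -> strict_on coord_cut k a b \/ constant_on coord_cut k a b) ->
  exists2 i, (i < n)%N & strict_on coord_cut i a b.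
Proof.
move=> ab refined; apply: NNPP => none.
pose p := (a + b) / 2%:R; pose q := (p + b) / 2%:R.
have [ap pq qb] : [/\ a < p, p < q & q < b] by rewrite /q /p; split; lra.
suff : q <= p by rewrite leNgt pq.
apply/F_iso => x Fqx; apply: ideal_mem_of_cuts (F_ideal p) _ => k lt_kn.
have [strictk | constk] := refined k lt_kn; first by case: none; exists k.
exact: constk p q ap (lt_trans pq qb) (lt_trans ap pq) qb _ (cut_self lt_kn Fqx).
Qed.

Lemma separating_elt a b p q : a < p -> p < q -> q < b -> exists y, F q y /\
  forall k, (k < n)%N -> strict_on coord_cut k a b -> ~ cut k (F p) (f y k).
Proof.
move=> ap pq qb.
suff [y Fy ysep] : exists2 y, F q y & forall k, (k < n)%N ->
  strict_on coord_cut k a b -> ~ cut k (F p) (f y k) by exists y.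
apply: (ideal_meets_upclosed
  (Q := fun k y => strict_on coord_cut k a b -> ~ cut k (F p) (f y k)) (F_ideal q))
  => [k y y' lt_kn yy' sep strictk cut' | k lt_kn].
  exact: sep strictk (cut_down lt_kn (coord_mono lt_kn yy') cut').
have [strictk | nstrictk] := classic (strict_on coord_cut k a b); last first.
  by case: (F_ideal q) => [[y Fy] _]; exists y.
have [c qc npc] : exists2 c, cut k (F q) c & ~ cut k (F p) c.
  apply: NNPP => none; apply: (strictk p q) => // c qc.
  by apply: NNPP => pc; apply: none; exists c.
have [x Fx cx] := qc; exists x => // _ pcx; apply: npc.
exact: cut_down lt_kn cx pcx.
Qed.

Lemma not_scattered_or_Omega_of_ideal_chain :
  ~ order_scattered le \/ has_Omega_subsemilattice join.
Proof.
have [a [b [ab refined]]] := refine_interval coord_cut_mono n.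
have [i lt_in stricti] := exists_strict_coord ab refined.
have [q0 [u [t [aq0 q0u tb ut_gap]]]] := gap_embedding ab.
have sep r := separating_elt (lt_trans aq0 (proj1 (q0u r))) (proj2 (q0u r)) (tb r).
have [e e_spec] := functional_choice _ sep.
apply: (@not_scattered_or_Omega (F q0) (strict_on coord_cut ^~ a ^~ b) e i) => //.
- move=> r s k rs lt_kn Sk esr; apply: (proj2 (e_spec s) k lt_kn Sk).
  apply: (cut_down lt_kn esr); apply: (coord_cut_mono (ltW (ut_gap r s rs))).
  exact: cut_self lt_kn (proj1 (e_spec r)).
- move=> y r k Fy lt_kn Sk ery; apply: (proj2 (e_spec r) k lt_kn Sk).
  apply: (cut_down lt_kn ery); apply: (coord_cut_mono (ltW (proj1 (q0u r)))).
  exact: cut_self.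
- move=> r k lt_kn nSk; have [//|constk] := refined k lt_kn.
  have [q0ur urtr] := q0u r; have trb := tb r.
  apply: (constk q0 (t r)); try lra.
  exact: cut_self lt_kn (proj1 (e_spec r)).
Qed.

End IdealChain.

End ChainCoordinates.

End JoinSemilattice.

Theorem theorem9p7 (P : Type) (le : P -> P -> Prop) (join : P -> P -> P)
  (bot : P) (n : nat)
  (HP : is_join_semilattice le join)
  (Hbot : forall x, le bot x)
  (Hdim : join_dim le join n) :
  order_scattered_on (is_ideal le) (@set_incl P)
  <-> (order_scattered le /\ ~ has_Omega_subsemilattice join).
Proof.
case: Hdim => [[C [leC [f [chains [f_inj f_join]]]]] _].
split; [move=> scL | move=> [scP no_Omega] [F [F_ideal F_iso]]].
  split; first exact: scattered_of_ideals_scattered HP scL.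
  exact: no_Omega_of_ideals_scattered HP scL.
by case: (not_scattered_or_Omega_of_ideal_chain HP chains f_inj f_join F_ideal F_iso).
Qed.
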